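(* Let $(\mathcal{A},\mu,\alpha)$ be a Hom-Malcev-admissible superalgebra. Then for each $n\geq 0$ the $n$th derived Hom-superalgebra $\mathcal{A}^{n}=(\mathcal{A},\mu^{(n)}=\alpha^{2^{n}-1}\circ\mu,\alpha^{2^{n}})$ is also a Hom-Malcev-admissible superalgebra.
   Context: $\mathcal{A}=\mathcal{A}_0\oplus\mathcal{A}_1$ is a $\mathbb{Z}_2$-graded vector space over an algebraically closed field $\mathbb{K}$ of characteristic $0$; $|x|$ is the parity of homogeneous $x$; even maps preserve parity. A Hom-superalgebra is a triple $(\mathcal{A},\mu,\alpha)$ with $\mu$ even bilinear, $\alpha$ even linear and $\alpha\circ\mu=\mu\circ(\alpha\otimes\alpha)$. Its super-commutator Hom-superalgebra is $\mathcal{A}^-=(\mathcal{A},[-,-],\alpha)$ with $[x,y]=\mu(x,y)-(-1)^{|x||y|}\mu(y,x)$. For a bracket, $\widetilde{J}(x,y,z)=[[x,y],\alpha(z)]-[\alpha(x),[y,z]]-(-1)^{|y||z|}[[x,z],\alpha(y)]$. A Hom-Malcev superalgebra is a Hom-superalgebra $(\mathcal{A},[-,-],\alpha)$ with $[x,y]=-(-1)^{|x||y|}[y,x]$ and, for all homogeneous $x,y,z,t$, $2[\alpha^{2}(t),\widetilde{J}(x,y,z)]=\widetilde{J}(\alpha(t),\alpha(x),[y,z])+(-1)^{|x|(|y|+|z|)}\widetilde{J}(\alpha(t),\alpha(y),[z,x])+(-1)^{|z|(|x|+|y|)}\widetilde{J}(\alpha(t),\alpha(z),[x,y])$. A Hom-superalgebra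 is Hom-Malcev-admissible if $\mathcal{A}^-$ is a Hom-Malcev superalgebra. *)

From mathcomp Require Import all_boot all_algebra.
Set Implicit Arguments. Unset Strict Implicit. Unset Printing Implicit Defensive.
Import GRing.Theory.
Local Open Scope ring_scope.

(* A Z2-graded vector space A = A0 (+) A1 is modelled as the product A0 * A1
   of two K-vector spaces; x is homogeneous of parity b iff its other
   component vanishes.  Parities are booleans (false = 0, true = 1). *)
Section Super.
Variables (K : fieldType) (A0 A1 : lmodType K).
Notation A := (A0 * A1)%type.

Definition homog (b : bool) (x : A) : Prop :=
  if b then x.1 = 0 else x.2 = 0.

Definition sgn (b : bool) : K := if b then -1 else 1.

Definition even_map (f : A -> A) : Prop :=
  forall b x, homog b x -> homog b (f x).

Definition even_bilin (m : A -> A -> A) : Prop :=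
  forall a b x y, homog a x -> homog b y -> homog (addb a b) (m x y).

Definition is_linear_map (f : A -> A) : Prop :=
  forall (k : K) x y, f (k *: x + y) = k *: f x + f y.

Definition is_bilinear (m : A -> A -> A) : Prop :=
  (forall z, is_linear_map (fun x => m x z)) /\ (forall x, is_linear_map (m x)).

Definition HomSuperalgebra (mu : A -> A -> A) (alpha : A -> A) : Prop :=
  [/\ is_bilinear mu, even_bilin mu, is_linear_map alpha, even_map alpha
    & forall x y, alpha (mu x y) = mu (alpha x) (alpha y)].

Definition comp (b : bool) (x : A) : A := if b then (0, x.2) else (x.1, 0).

(* super-commutator [x,y] = mu(x,y) - (-1)^{|x||y|} mu(y,x) on homogeneous
   x, y, extended bilinearly via the homogeneous decomposition x = x_0 + x_1. *)
Definition supercomm (mu : A -> A -> A) (x y : A) : A :=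
  \sum_(a <- [:: false; true]) \sum_(b <- [:: false; true])
     (mu (comp a x) (comp b y) - sgn (a && b) *: mu (comp b y) (comp a x)).

(* J~(x,y,z) = [[x,y],alpha z] - [alpha x,[y,z]] - (-1)^{|y||z|}[[x,z],alpha y],
   where py, pz are the parities of y and z. *)
Definition Jt (br : A -> A -> A) (alpha : A -> A) (py pz : bool) (x y z : A) : A :=
  br (br x y) (alpha z) - br (alpha x) (br y z) - sgn (py && pz) *: br (br x z) (alpha y).

Definition HomMalcevSuperalgebra (br : A -> A -> A) (alpha : A -> A) : Prop :=
  [/\ HomSuperalgebra br alpha,
      (forall a b x y, homog a x -> homog b y ->
          br x y = - (sgn (a && b) *: br y x))
    & (forall a b c d x y z t, homog a x -> homog b y -> homog c z -> homog d t ->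
          2%:R *: br (alpha (alpha t)) (Jt br alpha b c x y z) =
            Jt br alpha a (addb b c) (alpha t) (alpha x) (br y z)
          + sgn (a && addb b c) *: Jt br alpha b (addb c a) (alpha t) (alpha y) (br z x)
          + sgn (c && addb a b) *: Jt br alpha c (addb a b) (alpha t) (alpha z) (br x y))].

Definition HomMalcevAdmissible (mu : A -> A -> A) (alpha : A -> A) : Prop :=
  HomMalcevSuperalgebra (supercomm mu) alpha.

Definition derived_mul (mu : A -> A -> A) (alpha : A -> A) (n : nat) (x y : A) : A :=
  iter (2 ^ n - 1) alpha (mu x y).
Definition derived_twist (alpha : A -> A) (n : nat) : A -> A :=
  iter (2 ^ n) alpha.

End Super.

From mathcomp Require Import all_boot all_algebra.
From Stdlib Require Import FunctionalExtensionality.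
Set Implicit Arguments. Unset Strict Implicit. Unset Printing Implicit Defensive.
Local Open Scope ring_scope.
Import GRing.Theory.

(* For any m, twisting (A, mu, alpha) into (A, alpha^m o mu, alpha^(m+1))
   preserves the Hom-superalgebra axioms, and since alpha^m is a linear map
   commuting with alpha and multiplicative for mu, it also commutes with the
   super-commutator.  Each term of the Hom-Malcev identity of the twisted
   bracket is then alpha^(2m) applied to the corresponding term for the
   original bracket, so the identity transfers.  The n-th derived algebra is
   the case m = 2^n - 1. *)

Section DerivedHomMalcev.
Variables (K : fieldType) (A0 A1 : lmodType K).
Notation A := (A0 * A1)%type.

Section LinearMap.
Variable f : A -> A.
Hypothesis f_lin : is_linear_map f.

Lemma linear_map0 : f 0 = 0.
Proof. by move: (f_lin 1 0 0); rewrite !scale1r addr0 -{1}[f 0]addr0 => /(addrI (f 0))/esym. Qed.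

Lemma linear_mapD x y : f (x + y) = f x + f y.
Proof. by rewrite -{1}[x]scale1r f_lin scale1r. Qed.

Lemma linear_mapZ k x : f (k *: x) = k *: f x.
Proof. by rewrite -[k *: x]addr0 f_lin linear_map0 addr0. Qed.

Lemma linear_mapN x : f (- x) = - f x.
Proof. by rewrite -scaleN1r linear_mapZ scaleN1r. Qed.

End LinearMap.

Lemma iter_linear_map (f : A -> A) m : is_linear_map f -> is_linear_map (iter m f).
Proof. by move=> f_lin; elim: m => [//|m IHm] k x y /=; rewrite IHm f_lin. Qed.

Lemma iter_even_map (f : A -> A) m : even_map f -> even_map (iter m f).
Proof. by move=> f_even; elim: m => [//|m IHm] b x hx /=; apply/f_even/IHm. Qed.

Lemma iter_multiplicative (f : A -> A) (mu : A -> A -> A) m :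
  (forall x y, f (mu x y) = mu (f x) (f y)) ->
  forall x y, iter m f (mu x y) = mu (iter m f x) (iter m f y).
Proof. by move=> fM; elim: m => [//|m IHm] x y /=; rewrite IHm fM. Qed.

Lemma iterC (f : A -> A) m x : iter m f (f x) = f (iter m f x).
Proof. by rewrite -iterSr. Qed.

Lemma HomSuperalgebra_twist (mu : A -> A -> A) (alpha : A -> A) m :
  HomSuperalgebra mu alpha ->
  HomSuperalgebra (fun x y => iter m alpha (mu x y)) (iter m.+1 alpha).
Proof.
case=> [[mu_linl mu_linr] mu_even alpha_lin alpha_even alphaM].
have am_lin := iter_linear_map m alpha_lin.
split.
- split=> [z|x] k u v /=.
  + by rewrite mu_linl linear_mapD // linear_mapZ.
  + by rewrite mu_linr linear_mapD // linear_mapZ.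
- by move=> p q x y hx hy; apply/(iter_even_map m alpha_even)/mu_even.
- exact: iter_linear_map.
- exact: iter_even_map.
- by move=> x y; rewrite -(iter_multiplicative m.+1 alphaM) -!iterD addnC.
Qed.

Lemma supercomm_postcomp (mu : A -> A -> A) (f : A -> A) :
  is_linear_map f ->
  supercomm (fun x y => f (mu x y)) = fun x y => f (supercomm mu x y).
Proof.
move=> f_lin; apply: functional_extensionality => x.
apply: functional_extensionality => y.
rewrite /supercomm !big_cons !big_nil /=.
by rewrite !(linear_mapD f_lin, linear_mapN f_lin, linear_mapZ f_lin, linear_map0 f_lin).
Qed.

Lemma Jt_morph (br : A -> A -> A) (alpha f : A -> A) p q x y z :
  is_linear_map f ->
  (forall u v, f (br u v) = br (f u) (f v)) ->
  (forall u, f (alpha u) = alpha (f u)) ->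
  f (Jt br alpha p q x y z) = Jt br alpha p q (f x) (f y) (f z).
Proof.
move=> f_lin fM f_alpha; rewrite /Jt.
by rewrite !(linear_mapD f_lin, linear_mapN f_lin, linear_mapZ f_lin) !fM !f_alpha.
Qed.

Lemma Jt_twist (br : A -> A -> A) (alpha : A -> A) m p q x y z :
  is_linear_map alpha ->
  (forall u v, alpha (br u v) = br (alpha u) (alpha v)) ->
  Jt (fun u v => iter m alpha (br u v)) (iter m.+1 alpha) p q x y z
  = iter m alpha (iter m alpha (Jt br alpha p q x y z)).
Proof.
move=> alpha_lin alphaM.
have am_lin := iter_linear_map m alpha_lin.
rewrite /Jt !iterSr -!(iter_multiplicative m alphaM).
by rewrite !(linear_mapD am_lin, linear_mapN am_lin, linear_mapZ am_lin).
Qed.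

Lemma HomMalcevSuperalgebra_twist (br : A -> A -> A) (alpha : A -> A) m :
  HomMalcevSuperalgebra br alpha ->
  HomMalcevSuperalgebra (fun x y => iter m alpha (br x y)) (iter m.+1 alpha).
Proof.
case=> br_hom br_skew br_malcev.
have [_ _ alpha_lin _ alphaM] := br_hom.
have am_lin := iter_linear_map m alpha_lin.
have amM := iter_multiplicative m alphaM.
have am_alpha := iterC alpha m.
split; first exact: HomSuperalgebra_twist.
- by move=> p q x y hx hy /=; rewrite (br_skew p q x y hx hy) linear_mapN // linear_mapZ.
- move=> p q c d x y z t hx hy hz ht.
  rewrite !Jt_twist //.
  have -> : iter m.+1 alpha (iter m.+1 alpha t)
            = iter m alpha (iter m alpha (alpha (alpha t))).
    by rewrite !iterSr -am_alpha.
  rewrite /= -!amM -!am_alpha -!(Jt_morph _ _ _ _ _ am_lin amM am_alpha).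
  by rewrite -!(linear_mapZ am_lin) -!(linear_mapD am_lin) (br_malcev p q c d x y z t).
Qed.

End DerivedHomMalcev.

Theorem mainTheorem6 (K : closedFieldType) (charK0 : [pchar K] =i pred0)
  (A0 A1 : lmodType K) (mu : A0 * A1 -> A0 * A1 -> A0 * A1) (alpha : A0 * A1 -> A0 * A1) :
  HomSuperalgebra mu alpha ->
  HomMalcevAdmissible mu alpha ->
  forall n : nat,
    HomSuperalgebra (derived_mul mu alpha n) (derived_twist alpha n) /\
    HomMalcevAdmissible (derived_mul mu alpha n) (derived_twist alpha n).
Proof.
move=> mu_hom mu_malcev n.
have -> : derived_twist alpha n = iter (2 ^ n - 1).+1 alpha.
  by rewrite /derived_twist subn1 prednK // expn_gt0.
rewrite /HomMalcevAdmissible /derived_mul; move: (2 ^ n - 1)%N => m.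
split; first exact: HomSuperalgebra_twist.
case: (mu_hom) => _ _ alpha_lin _ _.
rewrite (supercomm_postcomp _ (iter_linear_map m alpha_lin)).
exact: HomMalcevSuperalgebra_twist.
Qed.
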